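(* Let $P \in \mathbb{N}_0^{\sigma}$ and $w \in \Sigma^{*|_P}$. Every maximal clique of $G(P)$ containing $w$ is of the form $\{w\} \cup \{ w \circ (i,j) \mid i \in \mathrm{Pos}(w,x)\}$ for some symbol $x \in \Sigma$ and some position $j \in [n]$ with $w[j] \neq x$.
   Context: Alphabet $\Sigma = [\sigma]$. For a word $w$ of length $n$, $w[i]$ is its $i$-th symbol. The Parikh vector $P(w) \in \mathbb{N}_0^{\sigma}$ has $P(w)[a] = |\{i \in [n] : w[i]=a\}|$. For $P \in \mathbb{N}_0^\sigma$, $n := \sum_a P[a]$ and $\Sigma^{*|_P}$ is the set of words $w$ with $P(w)=P$. For $i \neq j$ with $w[i]\neq w[j]$, the 2-swap $w\circ(i,j)$ exchanges the symbols at positions $i$ and $j$. The configuration graph $G(P)$ has vertex set $\Sigma^{*|_P}$ and an edge $\{w,u\}$ whenever $u = w\circ(i,j)$ for some 2-swap. $\mathrm{Pos}(w,x) = \{i \in [n] : w[i]=x\}$. A maximal clique is a clique not contained in a strictly larger clique. *)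

From mathcomp Require Import all_boot.
Set Implicit Arguments. Unset Strict Implicit. Unset Printing Implicit Defensive.

(* Alphabet Sigma = [sigma] is 'I_sigma; a word of length n is a finite function 'I_n -> 'I_sigma. *)
Definition word (sigma n : nat) := {ffun 'I_n -> 'I_sigma}.

Definition parikh sigma n (w : word sigma n) : {ffun 'I_sigma -> nat} :=
  [ffun a => #|[set i | w i == a]|].

(* n := sum_a P[a] *)
Definition plen sigma (P : {ffun 'I_sigma -> nat}) : nat := \sum_(a < sigma) P a.

Definition Pos sigma n (w : word sigma n) (x : 'I_sigma) : {set 'I_n} :=
  [set i | w i == x].

Definition swap sigma n (w : word sigma n) (i j : 'I_n) : word sigma n :=
  [ffun k => if k == i then w j else if k == j then w i else w k].

Definition vertex sigma (P : {ffun 'I_sigma -> nat}) (w : word sigma (plen P)) : Prop :=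
  parikh w = P.

Definition edge sigma (P : {ffun 'I_sigma -> nat}) (w u : word sigma (plen P)) : Prop :=
  vertex w /\ vertex u /\
  exists i j : 'I_(plen P), [/\ i != j, w i != w j & u = swap w i j].

Definition clique sigma (P : {ffun 'I_sigma -> nat}) (C : {set word sigma (plen P)}) : Prop :=
  (forall u, u \in C -> vertex u) /\
  (forall u v, u \in C -> v \in C -> u != v -> edge u v).

Definition maximal_clique sigma (P : {ffun 'I_sigma -> nat}) (C : {set word sigma (plen P)}) : Prop :=
  clique C /\ ~ (exists D : {set word sigma (plen P)}, clique D /\ C \proper D).

From mathcomp Require Import all_boot.
Set Implicit Arguments. Unset Strict Implicit. Unset Printing Implicit Defensive.

(* For a word w and a symbol x different from w[j], the "star"
     star w x j = {w} ∪ { w∘(i,j) | w[i] = x }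
   is a clique of G(P) (star_clique).  Conversely, every clique C through w
   lies in some star (clique_in_star): if C contains a neighbour
   u0 = w∘(i0,j0), then each other neighbour of w in C either shares position
   j0 with u0 and brings the symbol w[i0] there, or shares i0 and brings w[j0]
   (neighbour_in_stars), i.e. C lies in the union of the two stars through u0;
   and two words taken from the two "exclusive" parts of these stars differ in
   three positions, so they are not adjacent (stars_apart).  Hence C lies in
   a single star.  Maximality of C then forces equality (maximal_clique_sub).
   The only combinatorial tool is that a 2-swap changes at most two positions
   (swap_changes_at_most_two). *)

Section Swap.
Variables sigma n : nat.
Implicit Types (w u v : word sigma n) (i j k l m p q : 'I_n).

Lemma swap_l w i j : swap w i j i = w j.
Proof. by rewrite ffunE eqxx. Qed.

Lemma swap_r w i j : swap w i j j = w i.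
Proof. by rewrite ffunE eqxx; case: eqP => [->|]. Qed.

Lemma swap_other w i j k : k != i -> k != j -> swap w i j k = w k.
Proof. by rewrite ffunE => /negbTE -> /negbTE ->. Qed.

Lemma swapC w i j : swap w i j = swap w j i.
Proof.
apply/ffunP=> k; rewrite !ffunE.
by case: (eqVneq k i) => [->|ki]; case: (eqVneq k j) => [e|kj] //; case: eqP => [->|].
Qed.

Lemma swap_id w i : swap w i i = w.
Proof. by apply/ffunP=> k; rewrite !ffunE; case: eqP => [->|]. Qed.

Lemma swapK w i j : swap (swap w i j) i j = w.
Proof.
apply/ffunP=> k.
case: (eqVneq k i) => [->|ki]; first by rewrite swap_l swap_r.
case: (eqVneq k j) => [->|kj]; first by rewrite swap_r swap_l.
by rewrite !swap_other.
Qed.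

(* A 2-swap is a permutation of positions, so it preserves the Parikh vector. *)
Lemma parikh_swap w i j : parikh (swap w i j) = parikh w.
Proof.
apply/ffunP => a; rewrite !ffunE.
pose t k : 'I_n := if k == i then j else if k == j then i else k.
have tK : cancel t t.
  move=> k; rewrite /t; case: (eqVneq k i) => [->|ki]; first by rewrite eqxx; case: eqP.
  by case: (eqVneq k j) => [->|kj]; rewrite ?eqxx ?(negbTE ki) ?(negbTE kj).
have -> : [set k | swap w i j k == a] = t @^-1: [set k | w k == a].
  by apply/setP => k; rewrite !inE ffunE /t; case: (k == i); case: (k == j).
by rewrite card_preimset //; exact: can_inj tK.
Qed.

Lemma swap_moved w i j k : w k != swap w i j k -> (k == i) || (k == j).
Proof.
by rewrite ffunE; case: (k =P i) => // _; case: (k =P j) => //; rewrite eqxx.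
Qed.

Lemma swap_changes_at_most_two u v p q a b c : v = swap u p q ->
  a != b -> a != c -> b != c -> u a != v a -> u b != v b -> u c = v c.
Proof.
move=> -> ab ac bc /swap_moved ha /swap_moved hb; apply/eqP; apply: contraT.
move=> /swap_moved hc; move: ab ac bc.
by case/orP: ha => /eqP ->; case/orP: hb => /eqP ->; case/orP: hc => /eqP ->;
   rewrite ?eqxx.
Qed.

(* Two neighbours in the same star differ by the swap of their centres. *)
Lemma swap_swap w i m j : w i = w m -> i != m -> i != j -> m != j ->
  swap w m j = swap (swap w i j) i m.
Proof.
move=> e im ij mj; apply/ffunP=> k; rewrite [in RHS]ffunE.
case: (eqVneq k i) => [->|ki]; first by rewrite swap_other // 1?eq_sym // swap_other // eq_sym.
case: (eqVneq k m) => [->|km]; first by rewrite !swap_l.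
case: (eqVneq k j) => [->|kj]; first by rewrite !swap_r.
by rewrite !swap_other.
Qed.

Definition star w (x : 'I_sigma) j : {set word sigma n} :=
  w |: [set swap w i j | i in Pos w x].

Lemma star_center w x j : w \in star w x j.
Proof. exact: setU11. Qed.

Lemma star_in w x i j : w i = x -> swap w i j \in star w x j.
Proof. by move=> wi; rewrite !inE; apply/orP; right; apply/imsetP; exists i; rewrite // inE wi. Qed.

Lemma starP w x j u : u \in star w x j -> u = w \/ exists i, w i = x /\ u = swap w i j.
Proof.
rewrite !inE => /orP [/eqP ->|/imsetP [i]]; first by left.
by rewrite inE => /eqP wi ->; right; exists i.
Qed.

Lemma neighbour_sharing w i j l : w i != w j -> w i != w l ->
  (exists p q, swap w i l = swap (swap w i j) p q) ->
  swap w i l \in star w (w i) j :|: star w (w j) i.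
Proof.
move=> wij wil [p [q e]].
have [->|lj] := eqVneq l j; first by rewrite inE star_in.
have ij : i != j by apply: contraNneq wij => ->.
have il : i != l by apply: contraNneq wil => ->.
(* The two words differ at j and l, so they agree at i: w[l] = w[j]. *)
have agree_i : swap w i j i = swap w i l i.
  apply: (@swap_changes_at_most_two _ _ p q j l i e); [by rewrite eq_sym..| |].
  - by rewrite swap_r swap_other // eq_sym.
  - by rewrite swap_r swap_other 1?eq_sym // eq_sym.
rewrite !swap_l in agree_i.
by rewrite inE orbC swapC star_in.
Qed.

Lemma neighbour_in_stars w i j k l : w i != w j -> w k != w l ->
  (exists p q, swap w k l = swap (swap w i j) p q) ->
  swap w k l \in star w (w i) j :|: star w (w j) i.
Proof.
wlog kij : k l / (k == i) || (k == j).
  move=> shared wij wkl adj; have [|] := boolP ((k == i) || (k == j)); first by move/shared; apply.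
  have [lij _|] := boolP ((l == i) || (l == j)).
    rewrite swapC; apply: shared => //; first by rewrite eq_sym.
    by rewrite swapC.
  (* Otherwise {k, l} and {i, j} are disjoint and the two words differ at i, j, k. *)
  rewrite !negb_or => /andP [li lj] /andP [ki kj].
  case: adj => p [q e]; have ij : i != j by apply: contraNneq wij => ->.
  have vi : swap w k l i = w i by rewrite swap_other // eq_sym.
  have vj : swap w k l j = w j by rewrite swap_other // eq_sym.
  have [ik jk wji] : [/\ i != k, j != k & w j != w i] by split; rewrite eq_sym.
  have := @swap_changes_at_most_two _ _ p q i j k e ij ik jk.
  rewrite swap_l swap_r swap_l vi vj swap_other // => /(_ wji wij) agree.
  by rewrite agree eqxx in wkl.
case/orP: kij => /eqP ->; first exact: neighbour_sharing.
move=> wij wjl [p [q e]]; rewrite setUC; apply: neighbour_sharing => //.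
  by rewrite eq_sym.
by exists p, q; rewrite [swap w j i]swapC.
Qed.

(* Words from the exclusive parts of the two stars through w∘(i,j) differ in
   the three positions i, j and the centre of the first one. *)
Lemma stars_apart w i j v v' : w i != w j ->
  v \in star w (w i) j -> v \notin star w (w j) i ->
  v' \in star w (w j) i -> v' \notin star w (w i) j ->
  ~ exists p q, v = swap v' p q.
Proof.
move=> wij vs1 vn2 v's2 v'n1 [p [q e]].
case/starP: vs1 vn2 e => [->|[m [wm ->]]]; first by rewrite star_center.
move=> vn2; case/starP: v's2 v'n1 => [->|[m' [wm' ->]]]; first by rewrite star_center.
move=> v'n1 e.
have im : i != m by apply: contraNneq vn2 => <-; rewrite swapC star_in.
have m'j : m' != j by apply: contraNneq v'n1 => ->; rewrite swapC star_in.
have ij : i != j by apply: contraNneq wij => ->.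
have jm : j != m by apply: contraNneq wij => ->; rewrite wm.
have mm' : m != m' by apply: contraNneq wij => e'; rewrite -wm -wm' e'.
have ui : swap w m' i i = w j by rewrite swap_r wm'.
have vi : swap w m j i = w i by rewrite swap_other // eq_sym.
have uj : swap w m' i j = w j by rewrite swap_other // eq_sym.
have vj : swap w m j j = w i by rewrite swap_r wm.
have um : swap w m' i m = w i by rewrite swap_other // eq_sym.
have wji : w j != w i by rewrite eq_sym.
have := @swap_changes_at_most_two _ _ p q i j m e ij im jm.
by rewrite ui vi uj vj um swap_l => /(_ wji wji) agree; rewrite agree eqxx in wij.
Qed.

End Swap.

Section Cliques.
Variables (sigma : nat) (P : {ffun 'I_sigma -> nat}).
Local Notation n := (plen P).
Implicit Types (w u v : word sigma n) (C D : {set word sigma n}).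

Lemma edge_swap u i j : vertex u -> i != j -> u i != u j -> edge u (swap u i j).
Proof.
move=> vu ij uij; do 2?split => //; last by exists i, j.
by rewrite /vertex parikh_swap.
Qed.

Lemma star_clique w x j : vertex w -> w j != x -> clique (star w x j).
Proof.
move=> vw wjx.
have nbr i : w i = x -> (i != j) * (w i != w j).
  move=> wi; split; last by rewrite wi eq_sym.
  by apply: contraNneq wjx => <-; rewrite wi.
split=> [u|u v].
  by case/starP=> [->|[i [_ ->]]] //; rewrite /vertex parikh_swap.
case/starP=> [->|[i [wi ->]]]; case/starP=> [->|[m [wm ->]]]; rewrite ?eqxx // => uv.
- by apply: edge_swap; rewrite ?nbr.
- have := @edge_swap (swap w i j) i j; rewrite swapK swap_l swap_r; apply.
  + by rewrite /vertex parikh_swap.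
  + exact: (nbr i wi).1.
  + by rewrite eq_sym (nbr i wi).2.
- have im : i != m by apply: contraNneq uv => ->.
  have [[ij _] [mj wmj]] := (nbr i wi, nbr m wm).
  rewrite (swap_swap (etrans wi (esym wm)) im ij mj).
  apply: edge_swap => //; first by rewrite /vertex parikh_swap.
  by rewrite swap_l swap_other // eq_sym.
Qed.

Lemma maximal_clique_sub C D : maximal_clique C -> clique D -> C \subset D -> C = D.
Proof.
move=> [_ maxC] cD CD; apply/eqP; apply: contraT => CneD.
by case: maxC; exists D; rewrite properEneq CneD CD.
Qed.

Lemma clique_in_star w C : clique C -> w \in C -> ~~ (C \subset [set w]) ->
  exists x j, w j != x /\ C \subset star w x j.
Proof.
move=> [_ adj] wC /subsetPn [u0 u0C]; rewrite inE => u0w.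
have [_ [_ [i0 [j0 [_ wij e0]]]]] := adj w u0 wC u0C (ltac:(by rewrite eq_sym)).
set S1 := star w (w i0) j0; set S2 := star w (w j0) i0.
have sub12 : C \subset S1 :|: S2.
  apply/subsetP => v vC; have [->|vw] := eqVneq v w; first by rewrite in_setU star_center.
  have [_ [_ [k [l [_ wkl ev]]]]] := adj w v wC vC (ltac:(by rewrite eq_sym)).
  rewrite ev; apply: neighbour_in_stars => //; rewrite -e0 -ev.
  have [->|vu0] := eqVneq v u0; first by exists i0, i0; rewrite swap_id.
  by have [_ [_ [p [q [_ _ e]]]]] := adj u0 v u0C vC (ltac:(by rewrite eq_sym)); exists p, q.
have [sub1|/subsetPn [v1 v1C v1n1]] := boolP (C \subset S1).
  by exists (w i0), j0; rewrite eq_sym.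
have v1s2 : v1 \in S2 by move/subsetP: sub12 => /(_ v1 v1C); rewrite inE (negbTE v1n1).
exists (w j0), i0; split => //.
apply/subsetP => v vC; apply: contraT => vn2.
have vs1 : v \in S1 by move/subsetP: sub12 => /(_ v vC); rewrite inE (negbTE vn2) orbF.
have v1v : v1 != v by apply: contraNneq v1n1 => ->.
have [_ [_ [p [q [_ _ e]]]]] := adj v1 v v1C vC v1v.
by case: (stars_apart wij vs1 vn2 v1s2 v1n1); exists p, q.
Qed.

End Cliques.

Lemma other_symbol sigma (a : 'I_sigma) : 1 < sigma -> exists x, a != x.
Proof.
move=> sigma_gt1; pose x0 : 'I_sigma := Ordinal (ltnW sigma_gt1).
pose x1 : 'I_sigma := Ordinal sigma_gt1.
by have [->|] := eqVneq a x0; [exists x1 | exists x0].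
Qed.

Theorem corollary1 (sigma : nat) (P : {ffun 'I_sigma -> nat})
    (Hsigma : 2 <= sigma) (Hn : 0 < plen P)
    (w : word sigma (plen P)) (Hw : vertex w)
    (C : {set word sigma (plen P)}) (HC : maximal_clique C) (HwC : w \in C) :
  exists (x : 'I_sigma) (j : 'I_(plen P)),
    w j != x /\ C = w |: [set swap w i j | i in Pos w x].
Proof.
have [x [j [wjx CS]]] : exists x j, w j != x /\ C \subset star w x j.
  have [Cw|] := boolP (C \subset [set w]); last exact: clique_in_star HC.1 HwC.
  pose j : 'I_(plen P) := Ordinal Hn.
  have [x wjx] := other_symbol (w j) Hsigma.
  exists x, j; split => //.
  by apply: subset_trans Cw _; rewrite sub1set star_center.
exists x, j; split => //.
exact: maximal_clique_sub HC (star_clique Hw wjx) CS.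
Qed.
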